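(* Let $G$ be a finitely generated group such that $[e]_g$ is a subgroup of $G$ for every $g\in G$. Suppose that for every sequence $g_1,g_2,\dots$ of elements of $G$ the intersection $\bigcap_{k\ge1}[e]_{[g_1,\dots,g_k]}$ is trivial. Then for every $k\ge1$ either $\gamma_k(G)=\{e\}$ or $\gamma_k(G)\neq\gamma_{k+1}(G)$.
   Context: $[x,y]=x^{-1}y^{-1}xy$, left-normed commutators $[y_1,\dots,y_{m+1}]=[[y_1,\dots,y_m],y_{m+1}]$, $[y_1]=y_1$. For $g\in G$, $[e]_g=\{[x,g]\mid x\in G\}$. $\gamma_1(G)=G$, $\gamma_{k+1}(G)=[\gamma_k(G),G]$. *)

From HB Require Import structures.
From mathcomp Require Import all_boot.
Set Implicit Arguments. Unset Strict Implicit. Unset Printing Implicit Defensive.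

Local Open Scope group_scope.

(* Subsets of G are predicates G -> Prop (G may be infinite). *)
Definition is_subgroup (G : groupType) (H : G -> Prop) : Prop :=
  [/\ H 1, (forall x y, H x -> H y -> H (x * y)) & (forall x, H x -> H x^-1)].

Definition generated (G : groupType) (S : G -> Prop) : G -> Prop :=
  fun x => forall H : G -> Prop, is_subgroup H -> (forall s, S s -> H s) -> H x.

Definition finitely_generated (G : groupType) : Prop :=
  exists s : seq G, forall x : G, generated (fun y => y \in s) x.

(* [e]_g = { [x,g] | x in G }, with commg x y = x^-1 y^-1 x y *)
Definition comm_class (G : groupType) (g : G) : G -> Prop :=
  fun y => exists x : G, y = commg x g.

(* left-normed commutator of a sequence: lcomm g n = [g 0, g 1, ..., g n]
   (i.e. [g_1,...,g_{n+1}] with 1-based indexing) *)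
Fixpoint lcomm (G : groupType) (g : nat -> G) (n : nat) : G :=
  match n with
  | 0 => g 0
  | n'.+1 => commg (lcomm g n') (g n)
  end.

(* lcs n = gamma_{n+1}(G) *)
Fixpoint lcs (G : groupType) (n : nat) : G -> Prop :=
  match n with
  | 0 => fun _ => True
  | n'.+1 => generated (fun y => exists a b : G, lcs n' a /\ y = commg a b)
  end.

(* gamma k = gamma_k(G) for k >= 1 (gamma 0 is junk, equal to G) *)
Definition gamma (G : groupType) (k : nat) : G -> Prop := @lcs G k.-1.

(* Suppose gamma_k(G) = gamma_(k+1)(G) = N is nontrivial. Since G is finitely
   generated, N is the normal closure of finitely many elements, so Zorn's
   lemma gives a normal subgroup M of G maximal among those properly contained
   in N. As N = [N, G], some commutator [x0, a] with a in N lies outside M.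
   The set [e]_a is a normal subgroup of G inside N, so [e]_a M is a normal
   subgroup strictly between M and N, hence equals N. Writing a = [x, a] m with
   m in M gives a^x = m^(a^-1), so a lies in M, and then so does [x0, a]: a
   contradiction. *)
From HB Require Import structures.
From mathcomp Require Import all_boot.
From mathcomp Require Import boolp classical_sets.

Set Implicit Arguments. Unset Strict Implicit.
Local Open Scope group_scope.

Ltac group_simpl := rewrite /commg /conjg ?invgM ?invgK;
  repeat progress rewrite ?mulgA ?mulgV ?mulVg ?mul1g ?mulg1 ?mulgK ?mulgVK
    ?invg1 ?invgK; try done.

Section Commutators.
Variable G : groupType.
Implicit Types x y z : G.

Lemma commMgJ x y z : [~ x * y, z] = [~ x, z] ^ y * [~ y, z].
Proof. group_simpl. Qed.

Lemma commVgJ x z : [~ x^-1, z] = [~ x, z]^-1 ^ x^-1.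
Proof. group_simpl. Qed.

Lemma commJg x y z : [~ x ^ y, z] = [~ x, z ^ y^-1] ^ y.
Proof. group_simpl. Qed.

Lemma commgMJ x y z : [~ x, y * z] = [~ x, z] * [~ x, y] ^ z.
Proof. group_simpl. Qed.

Lemma commgVJ x z : [~ x, z^-1] = [~ x, z]^-1 ^ z^-1.
Proof. group_simpl. Qed.

End Commutators.

Section NormalSubgroups.
Variable G : groupType.
Implicit Types (A X Y : G -> Prop) (S : G -> Prop) (T : seq G).

(* No unit requirement, so that the empty set qualifies: this makes the
   closure properties stable under unions of (possibly empty) chains. *)
Definition normal_closed A :=
  [/\ (forall x y, A x -> A y -> A (x * y)), (forall x, A x -> A x^-1)
    & (forall x y, A x -> A (x ^ y))].

Definition normal_subgroup X := X 1 /\ normal_closed X.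

Definition normally_generated T X :=
  (forall t, t \in T -> X t) /\
  (forall Y, normal_subgroup Y -> (forall t, t \in T -> Y t) ->
     forall z, X z -> Y z).

Lemma normal_subgroupW X : normal_subgroup X -> is_subgroup X.
Proof. by case=> X1 [XM XI _]; split. Qed.

Lemma normal_closed_unit A x : normal_closed A -> A x -> A 1.
Proof. by case=> AM AI _ Ax; rewrite -(mulgV x); apply: AM (AI _ Ax). Qed.

Lemma generated_base S s : S s -> generated S s.
Proof. by move=> Ss H _; apply. Qed.

Lemma generated_is_subgroup S : is_subgroup (generated S).
Proof.
split.
- by move=> H [].
- move=> x y hx hy H hH hS; case: (hH) => _ HM _.
  by apply: HM; [apply: hx|apply: hy].
- by move=> x hx H hH hS; case: (hH) => _ _ HI; apply: HI; apply: hx.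
Qed.

Lemma generated_normal S :
  (forall s y, S s -> S (s ^ y)) -> normal_subgroup (generated S).
Proof.
move=> SJ; have [S1 SM SI] := generated_is_subgroup S.
split=> //; split=> // x y hx H [H1 HM HI] hS.
apply: (hx (fun z => H (z ^ y))); last by move=> s /(SJ s y)/hS.
split; first by rewrite conj1g.
- by move=> a b ha hb; rewrite conjMg; apply: HM.
- by move=> a ha; rewrite conjVg; apply: HI.
Qed.

Lemma lcs_normal n : normal_subgroup (@lcs G n).
Proof.
elim: n => [|n [_ [_ _ NJ]]]; first by split.
apply: generated_normal => _ y [a [b [Na ->]]].
by exists (a ^ y), (b ^ y); rewrite conjRg; split; first exact: NJ.
Qed.

Lemma normal_commg_mem X x a : normal_subgroup X -> X a -> X [~ x, a].
Proof.
by case=> _ [XM XI XJ] Xa; rewrite commgEr; apply: XM (XJ _ _ (XI _ Xa)) Xa.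
Qed.

Lemma normal_mul X Y : normal_subgroup X -> normal_subgroup Y ->
  normal_subgroup (fun z => exists x y, [/\ X x, Y y & z = x * y]).
Proof.
move=> [X1 [XM XI XJ]] [Y1 [YM YI YJ]].
split; first by exists 1, 1; rewrite mulg1.
split.
- move=> _ _ [x1 [y1 [Xx1 Yy1 ->]]] [x2 [y2 [Xx2 Yy2 ->]]].
  exists (x1 * x2), (y1 ^ x2 * y2); split; [exact: XM|exact: YM (YJ _ _ Yy1) _|].
  by group_simpl.
- move=> _ [x [y [Xx Yy ->]]].
  exists x^-1, (y^-1 ^ x^-1); split; [exact: XI|exact: YJ (YI _ Yy)|].
  by group_simpl.
- move=> _ z [x [y [Xx Yy ->]]].
  by exists (x ^ z), (y ^ z); rewrite conjMg; split; [exact: XJ|exact: YJ|].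
Qed.

Lemma comm_class_normal (g : G) :
  is_subgroup (comm_class g) -> normal_subgroup (comm_class g).
Proof.
case=> K1 KM KI; split=> //; split=> // _ y [x ->].
have -> : [~ x, g] ^ y = [~ x * y, g] * [~ y, g]^-1 by group_simpl.
by apply: KM; [exists (x * y)|apply: KI; exists y].
Qed.

Lemma comm_left_normal X :
  normal_subgroup X -> normal_subgroup (fun a => forall b, X [~ a, b]).
Proof.
move=> [X1 [XM XI XJ]]; split; first by move=> b; rewrite comm1g.
split.
- by move=> x y hx hy b; rewrite commMgJ; apply: XM; [apply: XJ|].
- by move=> x hx b; rewrite commVgJ; apply/XJ/XI.
- by move=> x y hx b; rewrite commJg; apply: XJ.
Qed.

Lemma comm_right_subgroup X t :
  normal_subgroup X -> is_subgroup (fun c => X [~ t, c]).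
Proof.
move=> [X1 [XM XI XJ]]; split; first by rewrite commg1.
- by move=> x y hx hy; rewrite commgMJ; apply: XM => //; apply: XJ.
- by move=> x hx; rewrite commgVJ; apply/XJ/XI.
Qed.

Lemma lcs_normally_generated n :
  finitely_generated G -> exists T, normally_generated T (@lcs G n).
Proof.
case=> S genS; elim: n => [|n [T [TN Tgen]]].
  by exists S; split=> // X /normal_subgroupW XG XS z _; apply: genS.
exists [seq [~ t, s] | t <- T, s <- S]; split.
  move=> _ /allpairsP [[t s] [/= Tt Ss ->]].
  by apply: generated_base; exists t, s; split=> //; apply: TN.
move=> X nX XTS z /= Nz; apply: Nz; first exact: normal_subgroupW.
move=> _ [a [b [Na ->]]]; move: b; apply: (Tgen _ (comm_left_normal nX)) Na.
move=> t Tt c; apply: (genS c _ (comm_right_subgroup t nX)) => s Ss.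
by apply: XTS; apply/allpairsP; exists (t, s).
Qed.

End NormalSubgroups.

Section MaximalNormalBelow.
Variables (G : groupType) (N : G -> Prop) (T : seq G).
Hypotheses (nN : normal_subgroup N) (genN : normally_generated T N).

Let proper_normal A :=
  [/\ (A `<=` N)%classic, ~ (N `<=` A)%classic & normal_closed A].

Lemma chain_bigcup_seq (F : set (set G)) (s : seq G) :
  total_on F subset -> (exists X, F X) ->
  (forall t, t \in s -> (\bigcup_(X in F) X)%classic t) ->
  exists X, F X /\ forall t, t \in s -> X t.
Proof.
move=> Ftot [X0 FX0]; elim: s => [|t s IH] st; first by exists X0.
have [X [FX Xs]] := IH (fun u us => st u (mem_behead (s := t :: s) us)).
have [Y FY Yt] := st t (mem_head _ _).
have [XY|YX] := Ftot X Y FX FY.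
  by exists Y; split=> // u; rewrite in_cons => /orP[/eqP->|/Xs/XY].
by exists X; split=> // u; rewrite in_cons => /orP[/eqP->|/Xs]//; apply: YX.
Qed.

(* Finite normal generation of N is what keeps the union of a chain of proper
   normal subgroups proper. *)
Lemma proper_normal_bigcup (F : set (set G)) :
  (F `<=` proper_normal)%classic -> total_on F subset ->
  proper_normal (\bigcup_(X in F) X)%classic.
Proof.
move=> FP Ftot; have closed X : F X -> normal_closed X by case/FP.
have common x y : (\bigcup_(X in F) X)%classic x ->
    (\bigcup_(X in F) X)%classic y -> exists2 X, F X & X x /\ X y.
  move=> [X FX Xx] [Y FY Yy]; have [XY|YX] := Ftot X Y FX FY.
    by exists Y => //; split=> //; apply: XY.
  by exists X => //; split=> //; apply: YX.
split.
- by move=> x [X /FP[XN _ _] /XN].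
- move=> NU; have [X [FX X1T]] : exists X, F X /\ forall t, t \in 1 :: T -> X t.
    apply: chain_bigcup_seq => //.
      by have [X FX _] := NU 1 nN.1; exists X.
    move=> t; rewrite in_cons => /orP[/eqP->|/genN.1]; apply: NU.
    exact: nN.1.
  have [_ XnN Xn] := FP X FX; apply: XnN; apply: genN.2.
    by split=> //; apply: X1T; rewrite mem_head.
  by move=> t Tt; apply: X1T; rewrite in_cons Tt orbT.
- split.
  + move=> x y /common/[apply] -[X FX [Xx Xy]].
    by exists X => //; have [XM _ _] := closed X FX; apply: XM.
  + move=> x [X FX Xx]; exists X => //.
    by have [_ XI _] := closed X FX; apply: XI.
  + move=> x y [X FX Xx]; exists X => //.
    by have [_ _ XJ] := closed X FX; apply: XJ.
Qed.

Lemma exists_maximal_normal_below : ~ (forall x, N x -> x = 1) ->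
  exists M, [/\ normal_subgroup M, (M `<=` N)%classic, ~ (N `<=` M)%classic
    & forall B, (M `<` B)%classic -> normal_subgroup B -> (B `<=` N)%classic ->
        (N `<=` B)%classic].
Proof.
move=> Nnontriv.
have [M [[MN MnN Mn] Mmax]] := Zorn_bigcup proper_normal_bigcup.
have M1 : M 1.
  apply: contrapT => nM1; apply: (Mmax [set 1]%classic).
    split; first by move=> x Mx; case: nM1; apply: normal_closed_unit Mn Mx.
    by move/(_ 1 erefl).
  split; first by move=> _ ->; apply: nN.1.
    by move=> N1; apply: Nnontriv => x /N1.
  by split=> [_ _ -> ->|_ ->|_ y ->]; rewrite ?mulg1 ?invg1 ?conj1g.
exists M; split=> // B MB nB BN; apply: contrapT => nNB.
exact: Mmax MB (And3 BN nNB nB.2).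
Qed.

End MaximalNormalBelow.

Lemma commg_mul_mem (G : groupType) (M : G -> Prop) (x a m : G) :
  normal_subgroup M -> M m -> a = [~ x, a] * m -> M a.
Proof.
move=> [_ [_ MI MJ]] Mm ea.
have em : m = [~ x, a]^-1 * a by rewrite {2}ea mulKg.
have -> : a = (m ^ a^-1) ^ x^-1 by rewrite em; group_simpl.
by apply/MJ/MJ.
Qed.

Lemma exists_commg_notin (G : groupType) (N M : G -> Prop) :
  normal_subgroup M ->
  (N `<=` generated (fun y => exists a b, N a /\ y = [~ a, b]))%classic ->
  ~ (N `<=` M)%classic -> exists a x, N a /\ ~ M [~ x, a].
Proof.
move=> nM Nperfect MnN; have [_ [_ MI _]] := nM.
apply: contrapT => allM; apply: MnN => z /Nperfect.
apply; first exact: normal_subgroupW.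
move=> _ [b [c [Nb ->]]]; rewrite -invgR; apply: MI.
by apply: contrapT => nMcb; apply: allM; exists b, c.
Qed.

Lemma perfect_no_maximal_normal_below (G : groupType) (N M : G -> Prop) :
  (forall g : G, is_subgroup (comm_class g)) ->
  normal_subgroup N ->
  (N `<=` generated (fun y => exists a b, N a /\ y = [~ a, b]))%classic ->
  normal_subgroup M -> (M `<=` N)%classic -> ~ (N `<=` M)%classic ->
  ~ (forall B, (M `<` B)%classic -> normal_subgroup B -> (B `<=` N)%classic ->
       (N `<=` B)%classic).
Proof.
move=> Ksub nN Nperfect nM MN MnN Mmax; have [_ [NM _ _]] := nN.
have [a [x0 [Na Mx0a]]] := exists_commg_notin nM Nperfect MnN.
pose L z := exists k m, [/\ comm_class a k, M m & z = k * m].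
have nL : normal_subgroup L := normal_mul (comm_class_normal (Ksub a)) nM.
have LN : (L `<=` N)%classic.
  move=> _ [_ [m [[x ->] Mm ->]]].
  exact: NM (normal_commg_mem x nN Na) (MN _ Mm).
have ML : (M `<` L)%classic.
  split.
    move=> m Mm; exists 1, m; rewrite mul1g; split=> //.
    by exists 1; rewrite comm1g.
  move=> LM; apply: Mx0a; apply: LM.
  by exists [~ x0, a], 1; rewrite mulg1; split=> //; [exists x0|exact: nM.1].
have [_ [m [[x ->] Mm ea]]] := Mmax L ML nL LN a Na.
have Ma := commg_mul_mem nM Mm ea.
exact: Mx0a (normal_commg_mem x0 nM Ma).
Qed.

Theorem mainTheorem8 (G : groupType)
  (hfg : finitely_generated G)
  (hsub : forall g : G, is_subgroup (comm_class g))
  (hint : forall g : nat -> G,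
      forall x : G, (forall n : nat, comm_class (lcomm g n) x) -> x = 1) :
  forall k : nat, (1 <= k)%N ->
    (forall x : G, @gamma G k x <-> x = 1) \/
    ~ (forall x : G, @gamma G k x <-> @gamma G k.+1 x).
Proof.
case=> [//|k] _; rewrite /gamma /=.
have [triv|nontriv] := pselect (forall x : G, lcs k x <-> x = 1); [by left|right].
move=> perfect; have nN := lcs_normal G k.
have [T genN] := lcs_normally_generated k hfg.
have [|M [nM MN MnN Mmax]] := exists_maximal_normal_below nN genN.
  by move=> N1; apply: nontriv => x; split=> [/N1|->] //; exact: nN.1.
apply: (perfect_no_maximal_normal_below hsub nN _ nM MN MnN Mmax).
by move=> z /(perfect z).1.
Qed.
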